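(* Let $\mathbf{k}$ be an algebraically closed field of characteristic $0$, $G=\mathrm{GL}_2$, $(\rho,L)$ the $3$-dimensional irreducible rational representation $L=L(2\epsilon_1)$, $\underline{G}=G\ltimes_\rho L$, and $\underline{\mathcal{N}}=\mathcal{N}\times L$ where $\mathcal{N}$ is the nilpotent cone of $\mathfrak{gl}_2$. Let $J_2=\begin{pmatrix}0&1\\0&0\end{pmatrix}$, let $v_0\in L$ be a nonzero lowest weight vector and $v_i=\mathsf{d}\rho(J_2)^iv_0$ for $i=1,2$. Then $\underline{\mathcal{N}}$ is the disjoint union of exactly five $\underline{G}$-orbits, namely the orbits $\mathcal{O}_1,\dots,\mathcal{O}_5$ of $(0,0)$, $(0,v_0)$, $(0,v_0+v_2)$, $(J_2,0)$, $(J_2,v_0)$ respectively.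
   Context: $L(2\epsilon_1)$ can be realized as the quadratic forms in $x,y$ with $\mathrm{GL}_2$ acting by linear substitution. $\underline{G}$ is $G\times L$ with product $(g_1,v_1)(g_2,v_2)=(g_1g_2,\rho(g_1)v_2+v_1)$ and adjoint action $\mathrm{Ad}(g,v)(X,w)=(\mathrm{Ad}(g)X,-\mathsf{d}\rho(\mathrm{Ad}(g)X)v+\rho(g)w)$ on $\mathfrak{gl}_2\times L$. $\{v_0,v_1,v_2\}$ is a basis of $L$. *)

From HB Require Import structures.
From mathcomp Require Import all_boot all_order all_algebra.
Set Implicit Arguments. Unset Strict Implicit. Unset Printing Implicit Defensive.
Import Order.TTheory GRing.Theory Num.Theory.
Local Open Scope ring_scope.

(* L = L(2 eps_1) realized as binary quadratic forms a x^2 + b xy + c y^2,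
   stored as the column vector (a, b, c) w.r.t. the basis (x^2, xy, y^2).
   GL_2 acts by linear substitution  (rho g f)(x,y) = f((x,y) g), i.e.
   x |-> g11 x + g21 y,  y |-> g12 x + g22 y.  This is Sym^2 of the standard
   representation (x = e1, y = e2), i.e. L(2 eps_1). The formula is
   polynomial, so we define it over any commutative ring. *)
Definition rho (R : comNzRingType) (g : 'M[R]_2) : 'M[R]_3 :=
  let g11 := g 0 0 in let g12 := g 0 1 in
  let g21 := g 1 0 in let g22 := g 1 1 in
  \matrix_(i < 3, j < 3)
    nth 0 (nth [::] [:: [:: g11 ^+ 2; g11 * g12; g12 ^+ 2];
        [:: 2 * g11 * g21; g11 * g22 + g21 * g12; 2 * g12 * g22];
        [:: g21 ^+ 2; g21 * g22; g22 ^+ 2]] i) j.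

(* The differential d rho : gl_2 -> gl(L), computed as
   d/dt rho(1 + t X) at t = 0, with t a polynomial variable. *)
Definition drho (k : comNzRingType) (X : 'M[k]_2) : 'M[k]_3 :=
  map_mx (fun p : {poly k} => (deriv p).[0])
    (rho (1%:M + map_mx polyC X *m ('X)%:M)).

Definition J2 (k : comNzRingType) : 'M[k]_2 := \matrix_(i < 2, j < 2)
  (if (i == 0 :> nat) && (j == 1 :> nat) then 1 else 0).

Definition E21 (k : comNzRingType) : 'M[k]_2 := \matrix_(i < 2, j < 2)
  (if (i == 1 :> nat) && (j == 0 :> nat) then 1 else 0).

(* a nonzero lowest weight vector (Borel = upper triangular, torus = diagonal):
   a weight vector for the diagonal Cartan subalgebra killed by the negative
   root vector E21 *)
Definition lowest_weight_vector (k : comNzRingType) (v : 'cV[k]_3) : Prop :=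
  v != 0 /\
  (forall H : 'M[k]_2, is_diag_mx H -> exists c : k, drho H *m v = c *: v) /\
  drho (E21 k) *m v = 0.

Definition nilpotent (k : comNzRingType) (X : 'M[k]_2) : Prop :=
  exists n : nat, X ^+ n = 0.

Definition Ncone_ (k : comNzRingType) (p : 'M[k]_2 * 'cV[k]_3) : Prop :=
  nilpotent p.1.

(* adjoint action of (g, v) in G x| L on (X, w) in gl_2 x L *)
Definition Ad (k : comUnitRingType) (g : 'M[k]_2) (v : 'cV[k]_3)
  (p : 'M[k]_2 * 'cV[k]_3) : 'M[k]_2 * 'cV[k]_3 :=
  let Y := g *m p.1 *m invmx g in
  (Y, - (drho Y *m v) + rho g *m p.2).

Definition orbit_ (k : comUnitRingType) (p : 'M[k]_2 * 'cV[k]_3)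
  (q : 'M[k]_2 * 'cV[k]_3) : Prop :=
  exists (g : 'M[k]_2) (v : 'cV[k]_3), g \in unitmx /\ q = Ad g v p.

From HB Require Import structures.
From mathcomp Require Import all_boot all_order all_algebra.
From mathcomp Require Import ring.
Import Order.TTheory GRing.Theory Num.Theory.
Local Open Scope ring_scope.

(* For X = 0 the orbits are those of GL_2 on binary quadratic forms under
   substitution.  Over an algebraically closed field of characteristic not 2 a
   nonzero form can be given a nonzero x^2-coefficient, its square completed and
   then rescaled, which leaves c y^2 and 2c x^2 + c y^2 as the only nonzero
   normal forms.  A nonzero nilpotent X has X^2 = 0 and is conjugate to J2; the
   stabiliser of J2 contains the translations by L, which act by
   w |-> w - drho(J2) v and so clear the x^2 and xy coefficients, and the
   scalars s, which multiply the y^2 coefficient by s^2.  The five orbits are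
   separated by whether X = 0, whether w = 0, whether the discriminant
   b^2 - 4ac vanishes (rho g multiplies it by (det g)^2), and, for X = J2,
   whether w lies in the image of drho(J2), i.e. has no y^2 term. *)

Set Implicit Arguments.
Unset Strict Implicit.
Unset Printing Implicit Defensive.

Ltac mx_entries := apply/matrixP;
  case => [[|[|[|?]]] ?] //; case => [[|[|[|?]]] ?] //;
  rewrite ?(mxE, big_ord_recl, big_ord0) /=.

Section Coordinates.
Variable R : comNzRingType.

Definition mx2 (a b c d : R) : 'M[R]_2 :=
  \matrix_(i < 2, j < 2) nth 0 (nth [::] [:: [:: a; b]; [:: c; d]] i) j.
Definition cv3 (x y z : R) : 'cV[R]_3 := \col_(i < 3) nth 0 [:: x; y; z] i.

Lemma mx2_eta (g : 'M[R]_2) : g = mx2 (g 0 0) (g 0 1) (g 1 0) (g 1 1).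
Proof. by mx_entries; congr (g _ _); apply: val_inj. Qed.

Lemma cv3_eta (w : 'cV[R]_3) : w = cv3 (w 0 0) (w 1 0) (w 2 0).
Proof. by mx_entries; congr (w _ _); apply: val_inj. Qed.

Lemma cv3_inj (x y z x' y' z' : R) :
  cv3 x y z = cv3 x' y' z' -> [/\ x = x', y = y' & z = z'].
Proof.
move=> E; have := congr1 (fun w : 'cV[R]_3 => (w 0 0, w 1 0, w 2 0)) E.
by rewrite !mxE /= => -[-> -> ->].
Qed.

Lemma cv3_0 : cv3 0 0 0 = 0.
Proof. by mx_entries. Qed.

Lemma cv3D (x y z x' y' z' : R) :
  cv3 x y z + cv3 x' y' z' = cv3 (x + x') (y + y') (z + z').
Proof. by mx_entries. Qed.

Lemma cv3N (x y z : R) : - cv3 x y z = cv3 (- x) (- y) (- z).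
Proof. by mx_entries. Qed.

Lemma mx2_1 : 1%:M = mx2 1 0 0 1.
Proof. by mx_entries. Qed.

Lemma mx2_mul (a b c d a' b' c' d' : R) : mx2 a b c d *m mx2 a' b' c' d' =
  mx2 (a * a' + b * c') (a * b' + b * d') (c * a' + d * c') (c * b' + d * d').
Proof. by mx_entries; ring. Qed.

Lemma det_mx2 (a b c d : R) : \det (mx2 a b c d) = a * d - b * c.
Proof.
rewrite (expand_det_row _ 0) !big_ord_recl big_ord0 /cofactor !det_mx11 !mxE /=.
ring.
Qed.

Lemma mx2_sqr (X : 'M[R]_2) : X *m X = (X 0 0 + X 1 1) *: X - \det X *: 1%:M.
Proof. by rewrite [X]mx2_eta mx2_mul det_mx2 mx2_1; mx_entries; ring. Qed.

Lemma J2E : J2 R = mx2 0 1 0 0.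
Proof. by mx_entries. Qed.

Lemma E21E : E21 R = mx2 0 0 1 0.
Proof. by mx_entries. Qed.

Lemma rhoM (g h : 'M[R]_2) : rho (g *m h) = rho g *m rho h.
Proof.
rewrite [g]mx2_eta [h]mx2_eta mx2_mul.
move: (g 0 0) (g 0 1) (g 1 0) (g 1 1) (h 0 0) (h 0 1) (h 1 0) (h 1 1) => *.
by mx_entries; ring.
Qed.

Lemma rho1 : rho (1%:M : 'M[R]_2) = 1%:M.
Proof. by mx_entries; ring. Qed.

Lemma rho0 : rho (0 : 'M[R]_2) = 0.
Proof. by mx_entries; ring. Qed.

Definition rho_polar (P Q : 'M[R]_2) : 'M[R]_3 := rho (P + Q) - rho P - rho Q.

(* [rho] is quadratic, so [rho (1 + t X) = rho 1 + t rho_polar 1 X + t^2 rho X]. *)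
Lemma drho_polar (X : 'M[R]_2) : drho X = rho_polar 1%:M X.
Proof.
have deriv0M (p q : {poly R}) :
    (deriv (p * q)).[0] = (deriv p).[0] * q.[0] + p.[0] * (deriv q).[0].
  by rewrite derivM hornerD !hornerM mulrC [_ * (deriv q).[0]]mulrC.
rewrite /drho /rho_polar mul_mx_scalar; apply/matrixP => i j; rewrite !mxE.
case: i => [[|[|[|i]]] Hi] //; case: j => [[|[|[|j]]] Hj] //=; rewrite ?mxE /=.
all: rewrite ?(expr2, deriv0M, derivD, derivC, derivX, hornerD, hornerM, hornerC,
  hornerX, horner0, mul0r, mulr0, add0r, addr0).
all: ring.
Qed.

Lemma rho_polar_mul (g h P Q : 'M[R]_2) :
  rho g *m rho_polar P Q *m rho h = rho_polar (g *m P *m h) (g *m Q *m h).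
Proof. by rewrite /rho_polar !mulmxBr !mulmxBl -!rhoM mulmxDr mulmxDl. Qed.

Lemma drho0 : drho (0 : 'M[R]_2) = 0.
Proof. by rewrite drho_polar /rho_polar addr0 subrr sub0r rho0 oppr0. Qed.

Lemma rho_cv3 (a b c d x y z : R) : rho (mx2 a b c d) *m cv3 x y z =
  cv3 (a ^+ 2 * x + a * b * y + b ^+ 2 * z)
      (2 * a * c * x + (a * d + c * b) * y + 2 * b * d * z)
      (c ^+ 2 * x + c * d * y + d ^+ 2 * z).
Proof. by mx_entries; ring. Qed.

Lemma drho_cv3 (a b c d x y z : R) : drho (mx2 a b c d) *m cv3 x y z =
  cv3 (2 * a * x + b * y) (2 * c * x + (a + d) * y + 2 * b * z) (c * y + 2 * d * z).
Proof. by rewrite drho_polar /rho_polar mx2_1; mx_entries; ring. Qed.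

Lemma drho_J2_cv3 (x y z : R) : drho (J2 R) *m cv3 x y z = cv3 y (2 * z) 0.
Proof. by rewrite J2E drho_cv3; congr cv3; ring. Qed.

End Coordinates.

Section Orbits.
Variable F : fieldType.
Implicit Types (g : 'M[F]_2) (p q r : 'M[F]_2 * 'cV[F]_3).

Lemma unitmx_mx2 (a b c d : F) : (mx2 a b c d \in unitmx) = (a * d - b * c != 0).
Proof. by rewrite unitmxE det_mx2 unitfE. Qed.

Lemma invmxM g h : g \in unitmx -> h \in unitmx ->
  invmx (g *m h) = invmx h *m invmx g.
Proof.
move=> ug uh; have ugh : g *m h \in unitmx by rewrite unitmx_mul ug uh.
have E : invmx h *m invmx g *m (g *m h) = 1%:M.
  by rewrite mulmxA -(mulmxA _ _ g) mulVmx // mulmx1 mulVmx.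
by rewrite -[LHS]mul1mx -E -mulmxA mulmxV // mulmx1.
Qed.

Lemma rho_drho_conj g (Z : 'M[F]_2) : g \in unitmx ->
  rho g *m drho Z = drho (g *m Z *m invmx g) *m rho g.
Proof.
move=> ug; have := rho_polar_mul g (invmx g) 1%:M Z.
rewrite mulmx1 mulmxV // -!drho_polar => <-.
by rewrite -mulmxA -rhoM mulVmx // rho1 mulmx1.
Qed.

Lemma Ad_comp g h v u p : g \in unitmx -> h \in unitmx ->
  Ad g v (Ad h u p) = Ad (g *m h) (v + rho g *m u) p.
Proof.
move=> ug uh; case: p => X w; rewrite /Ad /=.
have conjM : g *m (h *m X *m invmx h) *m invmx g = g *m h *m X *m invmx (g *m h).
  by rewrite invmxM // !mulmxA.
rewrite conjM; congr pair.
rewrite mulmxDr !mulmxN (mulmxA (rho g) (drho _)) rho_drho_conj // conjM.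
by rewrite mulmxA rhoM mulmxDr opprD addrA -!mulmxA.
Qed.

Lemma Ad1 p : Ad 1%:M 0 p = p.
Proof.
by case: p => X w; rewrite /Ad /= invmx1 mul1mx mulmx1 mulmx0 oppr0 add0r rho1 mul1mx.
Qed.

Lemma orbit_refl p : orbit_ p p.
Proof. by exists 1%:M, 0; rewrite unitmx1 Ad1. Qed.

Lemma orbit_sym p q : orbit_ p q -> orbit_ q p.
Proof.
case=> g [v [ug ->]].
exists (invmx g), (- (rho (invmx g) *m v)); split; first by rewrite unitmx_inv.
by rewrite Ad_comp ?unitmx_inv // addNr mulVmx // Ad1.
Qed.

Lemma orbit_trans p q r : orbit_ p q -> orbit_ q r -> orbit_ p r.
Proof.
case=> g [v [ug ->]] [h [u [uh ->]]].
exists (h *m g), (u + rho h *m v); split; first by rewrite unitmx_mul uh ug.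
by rewrite Ad_comp.
Qed.

Lemma Ad_zero g v w : Ad g v (0, w) = (0, rho g *m w).
Proof. by rewrite /Ad /= mulmx0 mul0mx drho0 mul0mx oppr0 add0r. Qed.

Lemma orbit_zero g w : g \in unitmx -> orbit_ (0, w) (0, rho g *m w).
Proof. by move=> ug; exists g, 0; rewrite Ad_zero. Qed.

Lemma orbit_zeroP w q :
  orbit_ (0, w) q -> exists2 g, g \in unitmx & q = (0, rho g *m w).
Proof. by case=> g [v [ug ->]]; exists g; rewrite ?Ad_zero. Qed.

Lemma orbit_fst_eq0 p q : orbit_ p q -> (p.1 == 0) = (q.1 == 0).
Proof.
case=> g [v [ug ->]] /=; apply/eqP/eqP => [->|]; first by rewrite mulmx0 mul0mx.
move/(congr1 (fun M => invmx g *m M *m g)).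
by rewrite !mulmxA mulVmx // mul1mx mulmxKV // mulmx0 mul0mx.
Qed.

Lemma orbit_sqr0_Ncone X w p : X *m X = 0 -> orbit_ (X, w) p -> Ncone_ p.
Proof.
move=> XX [g [v [ug ->]]]; exists 2%N; rewrite /= expr2 -mulmxE.
rewrite -!mulmxA (mulmxA (invmx g)) mulVmx // mul1mx.
by rewrite (mulmxA X) XX mul0mx mulmx0.
Qed.

Definition disc (w : 'cV[F]_3) := w 1 0 ^+ 2 - 4 * w 0 0 * w 2 0.

Lemma disc_cv3 (x y z : F) : disc (cv3 x y z) = y ^+ 2 - 4 * x * z.
Proof. by rewrite /disc !mxE. Qed.

Lemma disc_rho g w : disc (rho g *m w) = \det g ^+ 2 * disc w.
Proof. by rewrite [g]mx2_eta [w]cv3_eta rho_cv3 !disc_cv3 det_mx2; ring. Qed.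

End Orbits.

Section Nilpotent.
Variable F : fieldType.

Lemma nilpotent_sqr0 (X : 'M[F]_2) : nilpotent X -> X *m X = 0.
Proof.
case=> n Xn0; have n_gt0 : (0 < n)%N.
  by case: n Xn0 => // /eqP; rewrite expr0 oner_eq0.
have detX : \det X = 0.
  have detXn m : \det (X ^+ m) = \det X ^+ m.
    by elim: m => [|m IH]; rewrite ?expr0 ?det1 // !exprS -mulmxE det_mulmx IH.
  have : \det X ^+ n == 0 by rewrite -detXn Xn0 det0.
  by rewrite expf_eq0 n_gt0 => /eqP.
set t := X 0 0 + X 1 1.
have XX : X *m X = t *: X by rewrite mx2_sqr detX scale0r subr0.
have [t0|t_neq0] := eqVneq t 0; first by rewrite XX t0 scale0r.
have Xpow m : X ^+ m.+1 = t ^+ m *: X.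
  elim: m => [|m IH]; first by rewrite expr0 scale1r expr1.
  by rewrite exprS IH -mulmxE -scalemxAr XX scalerA -exprSr.
move: Xn0; case: n n_gt0 => // n _; rewrite Xpow => /eqP.
by rewrite scaler_eq0 expf_eq0 (negbTE t_neq0) andbF /= => /eqP ->; rewrite mul0mx.
Qed.

Lemma sqr0_conj_J2 (X : 'M[F]_2) : X *m X = 0 -> X != 0 ->
  exists2 g, g \in unitmx & X = g *m J2 F *m invmx g.
Proof.
rewrite [X]mx2_eta; move: (X 0 0) (X 0 1) (X 1 0) (X 1 1) => a b c d.
move=> /matrixP XX nz.
have e00 : a * a + b * c = 0 by move: (XX 0 0); rewrite mx2_mul !mxE.
have e10 : c * a + d * c = 0 by move: (XX 1 0); rewrite mx2_mul !mxE.
have e11 : c * b + d * d = 0 by move: (XX 1 1); rewrite mx2_mul !mxE.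
suff [g ug gJ2] : exists2 g, g \in unitmx & g *m J2 F = mx2 a b c d *m g.
  by exists g; rewrite // gJ2 mulmxK.
have [c0|c_neq0] := eqVneq c 0.
- have a0 : a = 0.
    by move/eqP: e00; rewrite c0 mulr0 addr0 mulf_eq0 orbb => /eqP.
  have d0 : d = 0.
    by move/eqP: e11; rewrite c0 mul0r add0r mulf_eq0 orbb => /eqP.
  have b_neq0 : b != 0.
    by apply: contraNneq nz => b0; rewrite a0 b0 c0 d0; apply/eqP; mx_entries.
  exists (mx2 b 0 0 1); first by rewrite unitmx_mx2 mulr1 mulr0 subr0.
  by rewrite J2E a0 c0 d0 !mx2_mul; congr mx2; ring.
- have da : d = - a.
    have : (d + a) * c == 0 by rewrite mulrDl addrC [a * c]mulrC e10.
    by rewrite mulf_eq0 (negbTE c_neq0) orbF addr_eq0 => /eqP.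
  have bE : b = - (a * a) / c.
    apply: (mulIf c_neq0); rewrite mulrVK ?unitfE //.
    by rewrite -(subr0 (b * c)) -e00; ring.
  exists (mx2 a 1 c 0); first by rewrite unitmx_mx2 mulr0 mul1r sub0r oppr_eq0.
  by rewrite J2E da bE !mx2_mul; congr mx2; field.
Qed.

End Nilpotent.

Section Reductions.
Variable F : fieldType.
Hypothesis two_neq0 : (2 : F) != 0.

Lemma four_neq0 : (4 : F) != 0.
Proof. by rewrite (_ : 4 = 2 * 2) ?mulf_neq0 //; ring. Qed.

Lemma lowest_weight_vector_cv3 (v : 'cV[F]_3) :
  lowest_weight_vector v -> exists2 c, c != 0 & v = cv3 0 0 c.
Proof.
case=> v_neq0 [_]; rewrite [v]cv3_eta E21E drho_cv3 -cv3_0.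
case/cv3_inj => _ e1 e2.
have y0 : v 1 0 = 0 by rewrite -e2; ring.
have x0 : v 0 0 = 0.
  have /eqP : 2 * v 0 0 = 0 by rewrite -e1 y0; ring.
  by rewrite mulf_eq0 (negbTE two_neq0) => /eqP.
rewrite x0 y0; exists (v 2 0) => //.
by apply: contraNneq v_neq0 => c0; rewrite [v]cv3_eta x0 y0 c0 cv3_0.
Qed.

Lemma orbit_zero_mx2 (a b c d : F) (w w' : 'cV[F]_3) :
  a * d - b * c != 0 -> rho (mx2 a b c d) *m w = w' -> orbit_ (0, w) (0, w').
Proof. by move=> det_neq0 <-; apply: orbit_zero; rewrite unitmx_mx2. Qed.

Lemma orbit_zero_lead (w : 'cV[F]_3) : w != 0 ->
  exists2 w', orbit_ (0, w) (0, w') & w' 0 0 != 0.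
Proof.
rewrite [w]cv3_eta; move: (w 0 0) (w 1 0) (w 2 0) => x y z nz.
have [x0|x_neq0] := eqVneq x 0; last first.
  by exists (cv3 x y z); [exact: orbit_refl | rewrite mxE].
have [z0|z_neq0] := eqVneq z 0.
- have y_neq0 : y != 0 by apply: contraNneq nz => y0; rewrite x0 y0 z0 cv3_0.
  exists (cv3 y y 0); last by rewrite mxE.
  apply: (@orbit_zero_mx2 1 1 0 1); first by rewrite mulr1 mulr0 subr0 oner_neq0.
  by rewrite rho_cv3 x0 z0; congr cv3; ring.
- exists (cv3 z y x); last by rewrite mxE.
  apply: (@orbit_zero_mx2 0 1 1 0).
    by rewrite mulr0 mulr1 sub0r oppr_eq0 oner_neq0.
  by rewrite rho_cv3; congr cv3; ring.
Qed.

Lemma orbit_zero_complete_square (x y z : F) : x != 0 ->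
  orbit_ (0, cv3 x y z) (0, cv3 x 0 (z - y ^+ 2 / (4 * x))).
Proof.
move=> x_neq0; apply: (@orbit_zero_mx2 1 0 (- (y / (2 * x))) 1).
  by rewrite mulr1 mul0r subr0 oner_neq0.
by rewrite rho_cv3; congr cv3; field; rewrite ?four_neq0 ?two_neq0 ?x_neq0.
Qed.

Lemma orbit_zero_diag (w : 'cV[F]_3) : w != 0 ->
  exists x z, x != 0 /\ orbit_ (0, w) (0, cv3 x 0 z).
Proof.
case/orbit_zero_lead => w' Ow' w'0_neq0; rewrite [w']cv3_eta in Ow'.
exists (w' 0 0), (w' 2 0 - w' 1 0 ^+ 2 / (4 * w' 0 0)); split => //.
exact: orbit_trans Ow' (orbit_zero_complete_square _ _ w'0_neq0).
Qed.

Lemma orbit_zero_scale (x z s t : F) : s != 0 -> t != 0 ->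
  orbit_ (0, cv3 x 0 z) (0, cv3 (s ^+ 2 * x) 0 (t ^+ 2 * z)).
Proof.
move=> s_neq0 t_neq0; apply: (@orbit_zero_mx2 s 0 0 t).
  by rewrite mulr0 subr0 mulf_neq0.
by rewrite rho_cv3; congr cv3; ring.
Qed.

Lemma orbit_zero_swap (x t : F) : t != 0 ->
  orbit_ (0, cv3 x 0 0) (0, cv3 0 0 (t ^+ 2 * x)).
Proof.
move=> t_neq0; apply: (@orbit_zero_mx2 0 1 t 0).
  by rewrite mulr0 mul1r sub0r oppr_eq0.
by rewrite rho_cv3; congr cv3; ring.
Qed.

Lemma orbit_J2_translate (w : 'cV[F]_3) : orbit_ (J2 F, w) (J2 F, cv3 0 0 (w 2 0)).
Proof.
rewrite [w]cv3_eta mxE /=; move: (w 0 0) (w 1 0) (w 2 0) => x y z.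
exists 1%:M, (cv3 0 x (y / 2)); split; first exact: unitmx1.
rewrite /Ad /= invmx1 mul1mx mulmx1 rho1 mul1mx drho_J2_cv3 cv3N cv3D.
by congr (_, cv3 _ _ _); field.
Qed.

Lemma orbit_J2_scale (x s : F) : s != 0 ->
  orbit_ (J2 F, cv3 0 0 x) (J2 F, cv3 0 0 (s ^+ 2 * x)).
Proof.
move=> s_neq0; have us : (s%:M : 'M[F]_2) \in unitmx.
  by rewrite unitmxE det_scalar unitfE expf_neq0.
exists s%:M, 0; split => //; rewrite /Ad /= -scalar_mxC mulmxK // mulmx0 oppr0 add0r.
have -> : s%:M = mx2 s 0 0 s by mx_entries.
by rewrite rho_cv3; congr (_, cv3 _ _ _); ring.
Qed.

Lemma orbit_J2_zero (w : 'cV[F]_3) : orbit_ (J2 F, 0) (J2 F, w) -> w 2 0 = 0.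
Proof.
case=> g [v [_]]; rewrite /Ad /= => -[conjJ2 ->].
by rewrite -conjJ2 mulmx0 addr0 [v]cv3_eta drho_J2_cv3 cv3N mxE /= oppr0.
Qed.

End Reductions.

Section NormalForms.
Variable k : closedFieldType.
Hypothesis two_neq0 : (2 : k) != 0.

Lemma exists_sqrt (a : k) : a != 0 -> exists2 s, s != 0 & s ^+ 2 = a.
Proof.
move=> a_neq0; have [s sE] := @solve_monicpoly k 2 (nth 0 [:: a]) isT.
have s2 : s ^+ 2 = a by rewrite sE !big_ord_recl big_ord0 /= expr0 mulr1 mul0r !addr0.
by exists s => //; apply: contraNneq a_neq0 => s0; rewrite -s2 s0 expr0n.
Qed.

(* Written so as to be convertible to the [rep] of [lemma2p1]. *)
Definition orbit_rep (v : 'cV[k]_3) (i : 'I_5) : 'M[k]_2 * 'cV[k]_3 :=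
  nth (0, 0) [:: (0, 0); (0, v); (0, v + drho (J2 k) *m (drho (J2 k) *m v));
                 (J2 k, 0); (J2 k, v)] i.

Variable c : k.
Hypothesis c_neq0 : c != 0.

Lemma lowest_add_highest :
  cv3 0 0 c + drho (J2 k) *m (drho (J2 k) *m cv3 0 0 c) = cv3 (2 * c) 0 c.
Proof. by rewrite !drho_J2_cv3 cv3D; congr cv3; ring. Qed.

Lemma orbit_rep_zero (w : 'cV[k]_3) :
  exists i, orbit_ (orbit_rep (cv3 0 0 c) i) (0, w).
Proof.
have [->|w_neq0] := eqVneq w 0; first by exists ord0; exact: orbit_refl.
have [x [z [x_neq0 Ow]]] := orbit_zero_diag two_neq0 w_neq0.
have [z0|z_neq0] := eqVneq z 0.
- have [t t_neq0 tE] := exists_sqrt (mulf_neq0 c_neq0 (invr_neq0 x_neq0)).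
  exists (Ordinal (isT : (1 < 5)%N)); apply/orbit_sym/(orbit_trans Ow).
  rewrite /orbit_rep /=.
  by rewrite z0 -[c](mulfVK x_neq0) -tE; exact: orbit_zero_swap.
- have two_c_neq0 : 2 * c != 0 by rewrite mulf_neq0.
  have [s s_neq0 sE] := exists_sqrt (mulf_neq0 two_c_neq0 (invr_neq0 x_neq0)).
  have [t t_neq0 tE] := exists_sqrt (mulf_neq0 c_neq0 (invr_neq0 z_neq0)).
  exists (Ordinal (isT : (2 < 5)%N)); apply/orbit_sym/(orbit_trans Ow).
  rewrite /orbit_rep /= lowest_add_highest.
  have -> : cv3 (2 * c) 0 c = cv3 (s ^+ 2 * x) 0 (t ^+ 2 * z) by rewrite sE tE !mulfVK.
  exact: orbit_zero_scale.
Qed.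

Lemma orbit_rep_nonzero (X : 'M[k]_2) (w : 'cV[k]_3) : X *m X = 0 -> X != 0 ->
  exists i, orbit_ (orbit_rep (cv3 0 0 c) i) (X, w).
Proof.
move=> XX X_neq0; have [g ug ->] := sqr0_conj_J2 XX X_neq0.
set w' := rho (invmx g) *m w.
have Ow : orbit_ (J2 k, cv3 0 0 (w' 2 0)) (g *m J2 k *m invmx g, w).
  apply: orbit_trans (orbit_sym (orbit_J2_translate two_neq0 w')) _.
  exists g, 0; split => //; rewrite /Ad /= mulmx0 oppr0 add0r /w'.
  by rewrite mulmxA -rhoM mulmxV // rho1 mul1mx.
have [w'0|w'_neq0] := eqVneq (w' 2 0) 0.
  by rewrite w'0 cv3_0 in Ow; exists (Ordinal (isT : (3 < 5)%N)).
have [s s_neq0 sE] := exists_sqrt (mulf_neq0 w'_neq0 (invr_neq0 c_neq0)).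
exists (Ordinal (isT : (4 < 5)%N)); apply: orbit_trans Ow; rewrite /orbit_rep /=.
by rewrite -[w' 2 0](mulfVK c_neq0) -sE; exact: orbit_J2_scale.
Qed.

Lemma orbit_rep_cover p : Ncone_ p <-> exists i, orbit_ (orbit_rep (cv3 0 0 c) i) p.
Proof.
case: p => X w; split => [/nilpotent_sqr0 XX | [i]].
  have [->|X_neq0] := eqVneq X 0; first exact: orbit_rep_zero.
  exact: orbit_rep_nonzero.
have J2_sqr : J2 k *m J2 k = 0 by rewrite J2E mx2_mul; mx_entries; ring.
by case: i => -[|[|[|[|[|?]]]]] ? //=; apply: orbit_sqr0_Ncone; rewrite ?mul0mx.
Qed.

Lemma orbit_rep_lt (i j : 'I_5) : (i < j)%N ->
  ~ orbit_ (orbit_rep (cv3 0 0 c) i) (orbit_rep (cv3 0 0 c) j).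
Proof.
have J2_neq0 : J2 k != 0.
  by apply/eqP => /matrixP/(_ 0 1); rewrite !mxE /= => /eqP; rewrite oner_eq0.
have c_cv3_neq0 x : cv3 x 0 c != 0.
  apply: contraNneq c_neq0 => /(congr1 (fun w : 'cV[k]_3 => w 2 0)).
  by rewrite !mxE /= => ->.
rewrite /orbit_rep; case: i j => -[|[|[|[|[|?]]]]] ? [[|[|[|[|[|?]]]]] ?] //= _;
  rewrite ?lowest_add_highest.
all: try by move/orbit_fst_eq0; rewrite /= eqxx (negbTE J2_neq0).
- by case/orbit_zeroP => g _ [] /eqP; rewrite mulmx0 (negbTE (c_cv3_neq0 _)).
- by case/orbit_zeroP => g _ [] /eqP; rewrite mulmx0 (negbTE (c_cv3_neq0 _)).
- case/orbit_zeroP => g _ [] /(congr1 (@disc k)); rewrite disc_rho !disc_cv3 => /eqP.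
  rewrite mulr0 mul0r subr0 expr0n mulr0 sub0r oppr_eq0; apply/negP.
  by rewrite !mulf_neq0 // (four_neq0 two_neq0).
- by move/orbit_J2_zero; rewrite mxE /=; apply/eqP.
Qed.

Lemma orbit_rep_disjoint (i j : 'I_5) : i != j ->
  forall p, ~ (orbit_ (orbit_rep (cv3 0 0 c) i) p /\
               orbit_ (orbit_rep (cv3 0 0 c) j) p).
Proof.
move=> ij p [Oi Oj]; have Oij := orbit_trans Oi (orbit_sym Oj).
case: (ltngtP i j) => [lt|gt|eq]; first exact: orbit_rep_lt lt Oij.
  exact: orbit_rep_lt gt (orbit_sym Oij).
by move: ij; rewrite (val_inj eq) eqxx.
Qed.

End NormalForms.

Theorem lemma2p1 (k : closedFieldType) (hchar : [pchar k] =i pred0)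
  (v0 : 'cV[k]_3) (hv0 : lowest_weight_vector v0) :
  let v1 := drho (J2 k) *m v0 in
  let v2 := drho (J2 k) *m v1 in
  let rep := fun i : 'I_5 =>
    nth (0, 0) [:: (0, 0); (0, v0); (0, v0 + v2); (J2 k, 0); (J2 k, v0)] i in
  (forall p : 'M[k]_2 * 'cV[k]_3,
      Ncone_ p <-> exists i : 'I_5, orbit_ (rep i) p) /\
  (forall i j : 'I_5, i != j ->
      forall p, ~ (orbit_ (rep i) p /\ orbit_ (rep j) p)).
Proof.
have two_neq0 : (2 : k) != 0 by have := hchar 2%N; rewrite !inE /= => ->.
have [c c_neq0 ->] := lowest_weight_vector_cv3 two_neq0 hv0.
move=> v1 v2 rep; split.
- exact: orbit_rep_cover.
- exact: orbit_rep_disjoint.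
Qed.
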